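(* Let $n\in\mathbb{N}_0$ and $r\in\mathbb{N}$, let $I$ be an open interval, and let $f_i:I\to\mathbb{R}$ ($i=1,\ldots,r$) and $g:I\to\mathbb{R}$ be functions which have a derivative of order $n$ on $I$. Suppose that $\mathbf{c}=(c_1,\ldots,c_r)\in\mathbb{R}^r$ satisfies $c_1+\cdots+c_r=0$. Then, for every $\mathbf{s}=(s_1,\ldots,s_r)\in(\mathbb{Z}_{\ge0})^r$ with $|\mathbf{s}|\le n$, \[ \sum_{|\mathbf{k}|=n}\binom{n}{\mathbf{k}}\prod_{i=1}^{r}c_i^{k_i}\left(f_i g^{k_i}\right)^{(s_i)}= \begin{cases} 0, & |\mathbf{s}|<n,\\[2mm] n!\left(\prod_{i=1}^{r}c_i^{s_i}\right)\left(\prod_{i=1}^{r}f_i\right)\left(g'\right)^{|\mathbf{s}|}, & |\mathbf{s}|=n. \end{cases} \]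
   Context: For $\mathbf{k}=(k_1,\ldots,k_r)\in\mathbb{Z}^r$, $|\mathbf{k}|=k_1+\cdots+k_r$. The sum $\sum_{|\mathbf{k}|=n}$ runs over all $\mathbf{k}\in(\mathbb{Z}_{\ge0})^r$ with $|\mathbf{k}|=n$, and $\binom{n}{\mathbf{k}}=\frac{n!}{k_1!\cdots k_r!\,(n-|\mathbf{k}|)!}$, i.e. the multinomial coefficient $\frac{n!}{k_1!\cdots k_r!}$ when $|\mathbf{k}|=n$. $h^{(s)}$ denotes the $s$-th derivative of $h$ (with $h^{(0)}=h$), and the conventions $c^0=1$ (including $0^0=1$) and $g^0=1$ are used. *)

From HB Require Import structures.
From mathcomp Require Import all_boot all_order all_algebra.
From mathcomp Require Import all_classical all_reals all_analysis.
Set Implicit Arguments. Unset Strict Implicit. Unset Printing Implicit Defensive.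
Import Order.TTheory GRing.Theory Num.Theory.
Local Open Scope ring_scope.

Definition mabs (r : nat) (k : 'I_r -> nat) : nat := (\sum_(i < r) k i)%N.

Definition multinom (R : realType) (r n : nat) (k : 'I_r -> nat) : R :=
  n`!%:R / ((\prod_(i < r) (k i)`!%:R) * (n - mabs k)`!%:R).

(* h has a derivative of order n on the set I: the successive derivatives
   h, h', ..., h^(n-1) are differentiable at every point of I. *)
Definition nth_derivable_on (R : realType) (n : nat) (I : set R) (h : R -> R) :=
  forall m : nat, (m < n)%N -> forall x, I x -> derivable (derive1n m h) x 1.

Definition open_itv (R : realType) (a b : \bar R) : set R :=
  [set x | (a < x%:E)%E /\ (x%:E < b)%E].

From HB Require Import structures.
From mathcomp Require Import all_boot all_order all_algebra.
From mathcomp Require Import all_classical all_reals all_analysis.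
From mathcomp Require Import ring zify.
Import Order.TTheory GRing.Theory Num.Theory numFieldNormedType.Exports.
Local Open Scope ring_scope.

(* Write (f g^k)^(s) = sum_j 'C(k, j) g^(k-j) A_(s,j), where A_(s,j) does not
   depend on k, vanishes for j > s, and A_(s,s) = s! f g'^s.  Then the left-hand
   side is n! times the coefficient of X^n in
     prod_i sum_m c_i^m / m! * (sum_j 'C(m, j) g^(m-j) A_(s_i,j)) X^m.
   Modulo X^(n+1) the i-th factor is B_i(X) exp(c_i g X) with
   B_i = sum_j c_i^j A_(s_i,j) / j! X^j of degree at most s_i, so since
   sum_i c_i = 0 the product is prod_i B_i, a polynomial of degree at most |s|
   whose coefficient of X^|s| is prod_i c_i^(s_i) A_(s_i,s_i) / s_i!. *)

Lemma sum_ord_widen {V : nmodType} {F : nat -> V} {a b} : (a <= b)%N ->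
  (forall j, (a < j)%N -> F j = 0) -> \sum_(j < a.+1) F j = \sum_(j < b.+1) F j.
Proof.
move=> ab F0; rewrite (big_ord_widen b.+1 F) ?ltnS // big_mkcond.
by apply: eq_bigr => j _; case: ltnP => // aj; rewrite F0.
Qed.

Lemma leq_mabs {r} (s : 'I_r -> nat) i : (s i <= mabs s)%N.
Proof. by rewrite /mabs (bigD1 i) //= leq_addr. Qed.

Section TruncatedProducts.
Variable R : comNzRingType.
Implicit Types p q : {poly R}.

Lemma take_polyMl m p q : take_poly m (take_poly m p * q) = take_poly m (p * q).
Proof.
apply/polyP => i; rewrite !coef_take_poly; case: ifP => // im.
rewrite !coefM; apply: eq_bigr => j _.
by rewrite coef_take_poly (leq_ltn_trans (leq_ord j) im).
Qed.

Lemma take_polyMr m p q : take_poly m (p * take_poly m q) = take_poly m (p * q).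
Proof. by rewrite mulrC take_polyMl mulrC. Qed.

Lemma take_poly_prod m I (r : seq I) (P : pred I) (F : I -> {poly R}) :
  take_poly m (\prod_(i <- r | P i) F i) =
  take_poly m (\prod_(i <- r | P i) take_poly m (F i)).
Proof.
elim/big_rec2: _ => // i p q _ IH.
by rewrite -take_polyMr IH take_polyMr take_polyMl.
Qed.

Lemma coef_prod_sum_size I (r : seq I) (F : I -> {poly R}) (d : I -> nat) :
  (forall i, (size (F i) <= (d i).+1)%N) ->
  (size (\prod_(i <- r) F i)%R <= (\sum_(i <- r) d i).+1)%N /\
  (\prod_(i <- r) F i)`_(\sum_(i <- r) d i) = \prod_(i <- r) (F i)`_(d i).
Proof.
move=> szF; elim: r => [|i r [IHsz IHcoef]].
  by rewrite !big_nil size_poly1 coefC.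
rewrite !big_cons; split.
  by have := size_polyMleq (F i) (\prod_(j <- r) F j); have := szF i; lia.
set S := (\sum_(j <- r) d j)%N.
have di_lt : (d i < (d i + S).+1)%N by rewrite ltnS leq_addr.
rewrite coefM (bigD1 (Ordinal di_lt)) //= addKn IHcoef.
rewrite [X in _ + X]big1 ?addr0 // => j /eqP jn.
have {}jn : nat_of_ord j <> d i by move=> e; apply: jn; apply: val_inj.
case: (ltnP j (d i)) => ji.
  by rewrite (leq_sizeP _ _ IHsz) ?mulr0 //; have := ltn_ord j; lia.
by rewrite (leq_sizeP _ _ (szF i)) ?mul0r //; lia.
Qed.

Lemma coef_prod_poly n r (F : 'I_r -> nat -> R) :
  (\prod_(i < r) \poly_(m < n.+1) F i m)`_n =
  \sum_(k : {ffun 'I_r -> 'I_n.+1} | mabs (fun i => nat_of_ord (k i)) == n)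
     \prod_(i < r) F i (k i).
Proof.
under eq_bigr do rewrite poly_def.
rewrite bigA_distr_bigA coef_sum [RHS]big_mkcond /=.
apply: eq_bigr => k _.
under eq_bigr do rewrite -mul_polyC.
rewrite big_split /= -rmorph_prod prodrXr coefCM coefXn /mabs eq_sym.
by case: (_ == _); rewrite ?mulr1 ?mulr0.
Qed.

End TruncatedProducts.

Section TruncatedExponential.
Variable R : numFieldType.

Lemma natr_fact_neq0 m : (m`!%:R : R) != 0.
Proof. by rewrite pnatr_eq0 -lt0n fact_gt0. Qed.

Lemma natr_bin_neq0 m j : (j <= m)%N -> ('C(m, j)%:R : R) != 0.
Proof. by rewrite pnatr_eq0 -lt0n bin_gt0. Qed.

Definition texp (n : nat) (w : R) : {poly R} := \poly_(m < n.+1) (w ^+ m / m`!%:R).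

Lemma texp0 n : texp n 0 = 1.
Proof.
apply/polyP => m; rewrite coef_poly coefC expr0n.
by case: m => [|m] /=; rewrite ?divr1 // mul0r if_same.
Qed.

Lemma take_texpM n w v : take_poly n.+1 (texp n w * texp n v) = texp n (w + v).
Proof.
apply/polyP => m; rewrite coef_take_poly !coef_poly; case: ifP => // mn.
rewrite coefM addrC exprDn mulr_suml; apply: eq_bigr => j _.
have jm : (j <= m)%N by rewrite -ltnS.
rewrite !coef_poly ltnS (leq_trans jm mn) ltnS (leq_trans (leq_subr j m) mn).
rewrite -(bin_fact jm) !natrM -mulr_natr.
by field; rewrite !natr_fact_neq0 natr_bin_neq0.
Qed.

Lemma take_prod_texp n I (r : seq I) (P : pred I) (w : I -> R) :
  take_poly n.+1 (\prod_(i <- r | P i) texp n (w i)) =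
  texp n (\sum_(i <- r | P i) w i).
Proof.
elim/big_rec2: _ => [|i v p _ IH]; first by rewrite texp0 take_poly_id ?size_poly1.
by rewrite -take_polyMr IH take_texpM.
Qed.

Lemma take_poly_binomial_texp n (c z : R) (al : nat -> R) :
  take_poly n.+1 (\poly_(j < n.+1) (c ^+ j * al j / j`!%:R) * texp n (c * z)) =
  \poly_(m < n.+1)
    (c ^+ m * (\sum_(j < n.+1) 'C(m, j)%:R * z ^+ (m - j) * al j) / m`!%:R).
Proof.
apply/polyP => m; rewrite coef_take_poly !coef_poly; case: ifP => // mn.
rewrite coefM -(sum_ord_widen (a := m) mn
  (F := fun j => 'C(m, j)%:R * z ^+ (m - j) * al j)); last first.
  by move=> j mj; rewrite bin_small // !mul0r.
rewrite mulr_sumr mulr_suml; apply: eq_bigr => j _.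
have jm : (j <= m)%N by rewrite -ltnS.
rewrite !coef_poly ltnS (leq_trans jm mn) ltnS (leq_trans (leq_subr j m) mn).
have -> : c ^+ m = c ^+ j * c ^+ (m - j) by rewrite -exprD subnKC.
rewrite -(bin_fact jm) !natrM exprMn -mulr_natr.
by field; rewrite !natr_fact_neq0 natr_bin_neq0.
Qed.

End TruncatedExponential.

Section MultinomialSums.
Context {R : realType}.

Lemma multinom_sum_coef n r (F : 'I_r -> nat -> R) :
  \sum_(k : {ffun 'I_r -> 'I_n.+1} | mabs (fun i => nat_of_ord (k i)) == n)
     multinom R n (fun i => nat_of_ord (k i)) * \prod_(i < r) F i (k i) =
  n`!%:R * (\prod_(i < r) \poly_(m < n.+1) (F i m / m`!%:R))`_n.
Proof.
rewrite coef_prod_poly mulr_sumr; apply: eq_bigr => k /eqP kn.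
rewrite /multinom kn subnn fact0 mulr1 big_split prodfV /=; ring.
Qed.

Lemma multinom_binomial_sum n r (c : 'I_r -> R) (z : R) (s : 'I_r -> nat)
    (al : 'I_r -> nat -> R) :
  \sum_(i < r) c i = 0 -> (mabs s <= n)%N ->
  (forall i j, (s i < j)%N -> al i j = 0) ->
  \sum_(k : {ffun 'I_r -> 'I_n.+1} | mabs (fun i => nat_of_ord (k i)) == n)
     multinom R n (fun i => nat_of_ord (k i)) *
     \prod_(i < r) (c i ^+ k i *
        \sum_(j < n.+1) 'C(k i, j)%:R * z ^+ (k i - j) * al i j)
  = if (mabs s < n)%N then 0
    else n`!%:R * \prod_(i < r) (c i ^+ s i * al i (s i) / (s i)`!%:R).
Proof.
move=> c0 sn al0.
rewrite (multinom_sum_coef n r (fun i m =>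
  c i ^+ m * \sum_(j < n.+1) 'C(m, j)%:R * z ^+ (m - j) * al i j)).
pose B i := \poly_(j < n.+1) (c i ^+ j * al i j / j`!%:R).
have -> : (\prod_(i < r) \poly_(m < n.+1) (c i ^+ m *
      (\sum_(j < n.+1) 'C(m, j)%:R * z ^+ (m - j) * al i j) / m`!%:R))`_n =
    (\prod_(i < r) B i)`_n.
  have coef_take p : (take_poly n.+1 p)`_n = p`_n by rewrite coef_take_poly ltnSn.
  rewrite -[LHS]coef_take -[RHS]coef_take; congr (_`_n).
  under eq_bigr do rewrite -take_poly_binomial_texp.
  rewrite -take_poly_prod big_split /= -take_polyMr take_prod_texp -mulr_suml c0.
  by rewrite mul0r texp0 mulr1.
have szB i : (size (B i) <= (s i).+1)%N.
  apply/leq_sizeP => j sj; rewrite coef_poly; case: ifP => // _.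
  by rewrite al0 // mulr0 mul0r.
have [szBs coefBs] := @coef_prod_sum_size _ _ (index_enum 'I_r) _ _ szB.
case: ltnP => [sn_lt|ns]; first by rewrite (leq_sizeP _ _ szBs) ?mulr0.
have -> : n = mabs s by apply/eqP; rewrite eqn_leq sn ns.
rewrite [X in _`_X]/mabs coefBs; congr (_ * _); apply: eq_bigr => i _.
by rewrite coef_poly ltnS (leq_trans (leq_mabs s i) sn).
Qed.

End MultinomialSums.

Lemma open_itv_open {R : realType} (a b : \bar R) : open (open_itv a b).
Proof. exact: openI (open_ereal_gt (y := a)) (open_ereal_lt (y := b)). Qed.

Section DerivativesOnOpenSet.
Context {R : realType} {I : set R} (I_open : open I).
Implicit Types (u v : R -> R) (m : nat).

Lemma near_in_open y : I y -> \forall z \near y, I z.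
Proof. by move=> Iy; move: I_open; rewrite openE => /(_ y Iy). Qed.

Lemma derive1n_eq_on {u v} : (forall y, I y -> u y = v y) ->
  forall j y, I y -> derive1n j u y = derive1n j v y.
Proof.
move=> uv j; elim: j => [|j IH] y Iy; first exact: uv.
rewrite !derive1nS !derive1E; apply: near_eq_derive.
by near=> z; apply: IH; near: z; apply: near_in_open.
Unshelve. all: by end_near.
Qed.

Lemma nth_derivable_on_eq {m u v} : (forall y, I y -> u y = v y) ->
  nth_derivable_on m I u -> nth_derivable_on m I v.
Proof.
move=> uv du j jm y Iy; apply: near_eq_derivable (du j jm y Iy).
by near=> z; apply: (derive1n_eq_on uv); near: z; apply: near_in_open.
Unshelve. all: by end_near.
Qed.

Lemma nth_derivable_on_le {m m' u} : (m' <= m)%N ->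
  nth_derivable_on m I u -> nth_derivable_on m' I u.
Proof. by move=> m'm du j jm'; apply/du/(leq_trans jm' m'm). Qed.

Lemma nth_derivable_onS m u :
  nth_derivable_on m.+1 I u <->
  (forall y, I y -> derivable u y 1) /\ nth_derivable_on m I (derive1 u).
Proof.
split=> [du | [du0 du] [|j] jm y Iy]; [split | exact: du0 |].
- exact: (du 0%N).
- by move=> j jm y Iy; rewrite -derive1Sn; apply: du.
- by rewrite derive1Sn; apply: du.
Qed.

Lemma nth_derivable_on_derive1 {m u} :
  nth_derivable_on m.+1 I u -> nth_derivable_on m I (derive1 u).
Proof. by move=> /nth_derivable_onS[]. Qed.

Lemma nth_derivable_on_cst m (k : R) : nth_derivable_on m I (cst k).
Proof.
elim: m k => [|m IH] k; first by move=> j; rewrite ltn0.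
apply/nth_derivable_onS; split=> [y _|]; first exact: derivable_cst.
by apply: nth_derivable_on_eq (IH 0) => y _; rewrite derive1_cst.
Qed.

Lemma nth_derivable_onD {m u v} :
  nth_derivable_on m I u -> nth_derivable_on m I v -> nth_derivable_on m I (u + v).
Proof.
elim: m u v => [|m IH] u v; first by move=> _ _ j; rewrite ltn0.
move=> /nth_derivable_onS[du du'] /nth_derivable_onS[dv dv'].
apply/nth_derivable_onS; split=> [y Iy|].
  exact: derivableD (du y Iy) (dv y Iy).
apply: nth_derivable_on_eq (IH _ _ du' dv') => y Iy.
by rewrite [RHS]derive1E (deriveD (du y Iy) (dv y Iy)) -!derive1E.
Qed.

Lemma nth_derivable_onM {m u v} :
  nth_derivable_on m I u -> nth_derivable_on m I v -> nth_derivable_on m I (u * v).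
Proof.
elim: m u v => [|m IH] u v; first by move=> _ _ j; rewrite ltn0.
move=> Du Dv; have /nth_derivable_onS[du Du'] := Du.
have /nth_derivable_onS[dv Dv'] := Dv.
apply/nth_derivable_onS; split=> [y Iy|].
  exact: derivableM (du y Iy) (dv y Iy).
have Du_m := nth_derivable_on_le (leqnSn m) Du.
have Dv_m := nth_derivable_on_le (leqnSn m) Dv.
apply: nth_derivable_on_eq (nth_derivable_onD (IH _ _ Du_m Dv') (IH _ _ Dv_m Du')).
by move=> y Iy; rewrite [RHS]derive1E (deriveM (du y Iy) (dv y Iy)) -!derive1E.
Qed.

Lemma nth_derivable_onZ {m} (k : R) {u} : nth_derivable_on m I u ->
  nth_derivable_on m I (k \*: u).
Proof. exact: nth_derivable_onM (nth_derivable_on_cst m k). Qed.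

End DerivativesOnOpenSet.

Lemma sum_binomial_pow_shift (R : comNzRingType) (k s : nat) (u du : R)
    (a da : nat -> R) :
  da s.+1 = 0 ->
  \sum_(j < s.+1) ('C(k, j)%:R * ((k - j)%:R * u ^+ (k - j).-1 * du) * a j
     + 'C(k, j)%:R * u ^+ (k - j) * da j)
  = \sum_(j < s.+2) 'C(k, j)%:R * u ^+ (k - j) *
      (da j + j%:R * du * (if (j : nat) is j'.+1 then a j' else 0)).
Proof.
move=> da_s; under [RHS]eq_bigr do rewrite mulrDr.
rewrite !big_split /= addrC; congr (_ + _).
  by rewrite [RHS]big_ord_recr /= da_s mulr0 addr0.
rewrite [RHS]big_ord_recl /= !mulr0 add0r; apply: eq_bigr => j _.
rewrite /bump leq0n add1n add0n -subnS.
have binS : ('C(k, j)%:R * (k - j)%:R : R) = 'C(k, j.+1)%:R * j.+1%:R.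
  by rewrite -!natrM mulnC -mul_bin_left mulnC.
transitivity ('C(k, j)%:R * (k - j)%:R * u ^+ (k - j.+1) * du * a j); first ring.
by rewrite binS; ring.
Qed.

Section DerivativesOfPowers.
Context {R : realType} (f g : R -> R).

(* The shift in j comes from 'C(k, j) (k - j) = 'C(k, j.+1) j.+1. *)
Fixpoint deriv_coef (s j : nat) : R -> R :=
  if s is s'.+1 then
    derive1 (deriv_coef s' j)
    + j%:R \*: derive1 g * (if j is j'.+1 then deriv_coef s' j' else cst 0)
  else if j == 0%N then f else cst 0.

Lemma deriv_coefS s j y : deriv_coef s.+1 j y =
  derive1 (deriv_coef s j) y
  + j%:R * derive1 g y * (if j is j'.+1 then deriv_coef s j' y else 0).
Proof. by case: j. Qed.

Lemma deriv_coef_gt s j : (s < j)%N -> deriv_coef s j = cst 0.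
Proof.
elim: s j => [|s IH] [|j] // sj; apply/funext => y.
by rewrite deriv_coefS !IH ?(ltnW sj) // derive1_cst mulr0 addr0.
Qed.

Lemma deriv_coef_diag s y : deriv_coef s s y = s`!%:R * f y * derive1 g y ^+ s.
Proof.
elim: s => [|s IH]; first by rewrite /= mul1r mulr1.
by rewrite deriv_coefS deriv_coef_gt // derive1_cst IH factS natrM exprS add0r; ring.
Qed.

Context {I : set R} {n : nat}.
Hypotheses (I_open : open I).
Hypotheses (Df : nth_derivable_on n I f) (Dg : nth_derivable_on n I g).

Lemma nth_derivable_on_deriv_coef s j : (s <= n)%N ->
  nth_derivable_on (n - s) I (deriv_coef s j).
Proof.
elim: s j => [|s IH] j sn.
  by rewrite subn0 /=; case: (j == 0%N); [exact: Df | exact: nth_derivable_on_cst].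
have sn' := ltnW sn; rewrite -subnSK // in IH.
have Dg' : nth_derivable_on (n - s.+1) I (derive1 g).
  apply: nth_derivable_on_derive1; rewrite subnSK //.
  exact: nth_derivable_on_le (leq_subr _ _) Dg.
apply: (nth_derivable_onD I_open); first exact: nth_derivable_on_derive1 (IH j sn').
apply: (nth_derivable_onM I_open); first exact: (nth_derivable_onZ I_open).
case: j => [|j]; first exact: nth_derivable_on_cst.
by apply: nth_derivable_on_le (IH j sn'); exact: leqnSn.
Qed.

Lemma derive1n_mul_pow s k y : (s <= n)%N -> I y ->
  derive1n s (f * g ^+ k) y =
  \sum_(j < s.+1) 'C(k, j)%:R * g y ^+ (k - j) * deriv_coef s j y.
Proof.
elim: s y => [|s IH] y sn Iy.
  by rewrite big_ord1 /= bin0 mul1r subn0 exprfctE mulrC.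
pose T j := 'C(k, j)%:R \*: g ^+ (k - j) * deriv_coef s j.
have dg : derivable g y 1 by apply: (Dg 0%N) => //; apply: leq_ltn_trans sn.
have dgX j : derivable ('C(k, j)%:R \*: g ^+ (k - j)) y 1.
  exact/derivableZ/derivableX.
have dA j : derivable (deriv_coef s j) y 1.
  by apply: (nth_derivable_on_deriv_coef _ j (ltnW sn) 0%N); rewrite ?subn_gt0.
rewrite derive1nS.
have -> : derive1 (derive1n s (f * g ^+ k)) y = derive1 (\sum_(j < s.+1) T j) y.
  rewrite -!derive1n1; apply: (derive1n_eq_on I_open) Iy => z Iz.
  rewrite IH ?(ltnW sn) // fct_sumE; apply: eq_bigr => j _.
  by rewrite /T exprfctE.
have DT j : 'D_1 (T j) y =
    'C(k, j)%:R * ((k - j)%:R * g y ^+ (k - j).-1 * derive1 g y) * deriv_coef s j y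
    + 'C(k, j)%:R * g y ^+ (k - j) * derive1 (deriv_coef s j) y.
  rewrite deriveM // deriveZ; last exact: derivableX.
  rewrite deriveX // -!derive1E /= exprfctE /GRing.scale /=.
  by rewrite addrC mulrC.
rewrite derive1E derive_sum => [|j]; last exact: derivableM.
under eq_bigr do rewrite DT.
rewrite (sum_binomial_pow_shift _ k s (g y) (derive1 g y) (fun j => deriv_coef s j y)
  (fun j => derive1 (deriv_coef s j) y)); last by rewrite deriv_coef_gt // derive1_cst.
by apply: eq_bigr => j _; rewrite deriv_coefS.
Qed.

End DerivativesOfPowers.

Theorem corollary2 (R : realType) (n r : nat) (a b : \bar R)
  (f : 'I_r -> R -> R) (g : R -> R) (c : 'I_r -> R) :
  (0 < r)%N -> (a < b)%E ->
  (forall i, nth_derivable_on n (open_itv a b) (f i)) ->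
  nth_derivable_on n (open_itv a b) g ->
  \sum_(i < r) c i = 0 ->
  forall s : 'I_r -> nat, (mabs s <= n)%N ->
  forall x, open_itv a b x ->
    \sum_(k : {ffun 'I_r -> 'I_n.+1} | mabs (fun i => nat_of_ord (k i)) == n)
       multinom R n (fun i => nat_of_ord (k i)) *
       \prod_(i < r) (c i ^+ k i *
          derive1n (s i) (fun y => f i y * g y ^+ k i) x)
    = if (mabs s < n)%N then 0
      else n`!%:R * (\prod_(i < r) c i ^+ s i) * (\prod_(i < r) f i x)
           * (derive1 g x) ^+ mabs s.
Proof.
move=> _ _ Df Dg c0 s sn x Ix.
have sn_i i : (s i <= n)%N := leq_trans (leq_mabs s i) sn.
have derive_term (k : nat) i : derive1n (s i) (fun y => f i y * g y ^+ k) x =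
    \sum_(j < n.+1) 'C(k, j)%:R * g x ^+ (k - j) * deriv_coef (f i) g (s i) j x.
  have -> : (fun y => f i y * g y ^+ k) = f i * g ^+ k by rewrite exprfctE.
  rewrite (derive1n_mul_pow _ _ (open_itv_open a b) (Df i) Dg _ _ _ (sn_i i) Ix).
  apply: (sum_ord_widen (sn_i i)
    (F := fun j => 'C(k, j)%:R * g x ^+ (k - j) * deriv_coef (f i) g (s i) j x)).
  by move=> j sj; rewrite deriv_coef_gt // mulr0.
under eq_bigr => k _ do under eq_bigr => i _ do rewrite derive_term.
rewrite (multinom_binomial_sum _ _ _ _ _ (fun i j => deriv_coef (f i) g (s i) j x) c0 sn);
  last by move=> i j sj; rewrite deriv_coef_gt.
case: ltnP => // _.
under eq_bigr => i _ do rewrite deriv_coef_diag.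
rewrite -!mulrA; congr (_ * _).
rewrite -prodrXr -!big_split /=; apply: eq_bigr => i _.
by field; rewrite natr_fact_neq0.
Qed.
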